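(* Let $d$ be a prime, $n\ge 1$, $0\le k\le n$, and let $L\subset\mathbb{F}_d^{2n}$ be a subspace with $L\subset L^{\perp}$ and $\dim L=n-k$. Fix hyperbolic pairs adapted to $L$, a unit vector $\ket{\overline{0^n}}$, the resulting code subspaces $\mathcal{C}^{(s)}$, coset representatives $\hat{x}(t)$, and the maps $\mathcal{R}^{(s,t)}$, all as described in the context. Then for every $t\in\mathbb{F}_d^{n-k}$ and every trace-preserving completely positive map $\mathcal{A}:\mathcal{B}(\mathcal{H}^{\otimes n})\to\mathcal{B}(\mathcal{H}^{\otimes n})$, $$\frac{1}{d^{n-k}}\sum_{s\in\mathbb{F}_d^{n-k}}F_{\rm e}\big(\pi_{\mathcal{C}^{(s)}},\mathcal{R}^{(s,t)}\mathcal{A}\big)=\sum_{x\in\hat{x}(t)+L}P_{\mathcal{A}}(x),$$ where $P_{\mathcal{A}}(x)=\bra{\Psi_x}[\mathrm{Id}\otimes\mathcal{A}](\ket{\Psi}\bra{\Psi})\ket{\Psi_x}$.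
   Context: $\mathcal{H}$ is a Hilbert space of prime dimension $d$ with orthonormal basis $\ket{0},\dots,\ket{d-1}$ indexed by $\mathbb{F}_d=\mathbb{Z}/d\mathbb{Z}$; $\omega$ is a primitive $d$-th root of unity. Define unitaries $X\ket{a}=\ket{a-1}$, $Z\ket{a}=\omega^a\ket{a}$, and for $(a,b)\in\mathbb{F}_d^2$ put $N_{(a,b)}=i^{ab}X^aZ^b$ if $d=2$ and $N_{(a,b)}=X^aZ^b$ if $d>2$. Identify $((x_1,z_1),\dots,(x_n,z_n))$ with $y=(x_1,z_1,\dots,x_n,z_n)\in\mathbb{F}_d^{2n}$ and set $N_y=N_{(x_1,z_1)}\otimes\cdots\otimes N_{(x_n,z_n)}$. The symplectic form is $\langle y,y'\rangle=\sum_{i=1}^n(x_iz_i'-z_ix_i')$, and $L^{\perp}=\{y:\langle x,y\rangle=0\ \forall x\in L\}$. For $l=(l_1,\dots,l_n)\in\mathbb{F}_d^n$ write $\ket{l}=\ket{l_1}\otimes\cdots\otimes\ket{l_n}$; $\ket{\Psi_y}=d^{-n/2}\sum_{l\in\mathbb{F}_d^n}\ket{l}\otimes N_y\ket{l}$ for $y\in\mathbb{F}_d^{2n}$, and $\ket{\Psi}=\ket{\Psi_{0}}$; $\mathrm{Id}$ is the identity map on $\mathcal{B}(\mathcal{H}^{\otimes n})$. Hyperbolic pairs adapted to $L$: vectors $g_1,\dots,g_n,h_1,\dots,h_n\in\mathbb{F}_d^{2n}$ with $g_1,\dots,g_{n-k}$ a basis of $L$ and $\langle g_i,h_j\rangle=\delta_{ij}$,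 $\langle g_i,g_j\rangle=0$, $\langle h_i,h_j\rangle=0$. Let $\ket{\overline{0^n}}$ be a unit vector with $N_{g_i}\ket{\overline{0^n}}=\ket{\overline{0^n}}$ for all $i$, and $\ket{\overline{l}}=\prod_{i=1}^n(N_{h_i})^{l_i}\ket{\overline{0^n}}$ for $l\in\mathbb{F}_d^n$. For $s\in\mathbb{F}_d^{n-k}$, $\mathcal{C}^{(s)}=\mathrm{span}\{\ket{\overline{(s,u)}}:u\in\mathbb{F}_d^k\}$, $\Pi_s$ is the orthogonal projection onto it, and $\pi_{\mathcal{C}^{(s)}}=\Pi_s/d^k$. For each $t\in\mathbb{F}_d^{n-k}$, $\hat{x}(t)$ is a chosen element of $\{x:\langle g_i,x\rangle=t_i,\ i=1,\dots,n-k\}$. $\mathcal{R}^{(s,t)}$ is $\sigma\mapsto R_t^{(s)}\sigma R_t^{(s)\dagger}$ with $R_t^{(s)}=N_{\hat{x}(t)}^{\dagger}\Pi_{t+s}$. $F_{\rm e}(\rho,\mathcal{E})=\sum_j|\mathrm{tr}(\rho E_j)|^2$ for a completely positive map $\mathcal{E}$ with Kraus operators $E_j$ (unnormalized entanglement fidelity). $\mathcal{M}\mathcal{L}$ denotes composition. *)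

From HB Require Import structures.
From mathcomp Require Import all_boot all_order all_algebra.
From mathcomp Require Import algC.
From mathcomp Require Import mxtens.
Set Implicit Arguments. Unset Strict Implicit. Unset Printing Implicit Defensive.
Import Order.TTheory GRing.Theory Num.Theory.
Local Open Scope ring_scope.

(* Phase space F_d^{2n}: an n x 2 matrix y, row i = (x_i, z_i). *)
Notation phase d n := 'M['F_d]_(n, 2).
Notation label d n := 'rV['F_d]_n.

Definition symp (d n : nat) (y y' : phase d n) : 'F_d :=
  \sum_(i < n) (y i 0 * y' i 1 - y i 1 * y' i 0).

Definition isotropic (d n : nat) (L : {vspace phase d n}) : Prop :=
  forall x y, x \in L -> y \in L -> symp x y = 0.

Definition dag (m p : nat) (A : 'M[algC]_(m, p)) : 'M[algC]_(p, m) :=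
  (map_mx Num.conj A)^T.

Definition qop (d : nat) (f : 'F_d -> 'F_d -> algC) : 'M[algC]_#|'F_d| :=
  \matrix_(i, j) f (enum_val i) (enum_val j).

Definition Xq (d : nat) : 'M[algC]_#|'F_d| :=
  qop (fun c a : 'F_d => (c == a - 1)%:R).
Definition Zq (d : nat) (w : algC) : 'M[algC]_#|'F_d| :=
  qop (fun c a : 'F_d => (c == a)%:R * w ^+ (val a)).

Definition Nq (d : nat) (w : algC) (a b : 'F_d) : 'M[algC]_#|'F_d| :=
  (if d == 2%N then 'i ^+ (val a * val b) else 1) *:
    ((Xq d) ^+ (val a) * (Zq d w) ^+ (val b)).

(* ---------- n qudits H^{(x)n} = C^{#|F_d^n|}, basis |l> ---------- *)
Notation dimn d n := #|label d n|.
Notation op d n := 'M[algC]_(dimn d n).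
Notation vec d n := 'cV[algC]_(dimn d n).

(* |l> = |l_1> (x) ... (x) |l_n> *)
Definition ket (d n : nat) (l : label d n) : vec d n := delta_mx (enum_rank l) 0.

Definition ntens (d n : nat) (A : 'I_n -> 'M[algC]_#|'F_d|) : op d n :=
  \matrix_(p, q) \prod_(i < n)
     A i (enum_rank ((enum_val p : label d n) 0 i))
         (enum_rank ((enum_val q : label d n) 0 i)).

Definition Nop (d n : nat) (w : algC) (y : phase d n) : op d n :=
  ntens (fun i => Nq w (y i 0) (y i 1)).

Definition Psi (d n : nat) (w : algC) (y : phase d n)
  : 'cV[algC]_(dimn d n * dimn d n) :=
  (sqrtC ((d ^ n)%N%:R))^-1 *:
    \sum_(l : label d n) (ket l *t (Nop w y *m ket l)).

(* A completely positive map, given by a finite list of Kraus operators: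
   sigma |-> sum_j E_j sigma E_j^dagger *)
Definition applyK (m : nat) (Ks : seq 'M[algC]_m) (rho : 'M[algC]_m) : 'M[algC]_m :=
  \sum_(E <- Ks) (E *m rho *m dag E).

Definition trace_preserving (m : nat) (Ks : seq 'M[algC]_m) : Prop :=
  \sum_(E <- Ks) (dag E *m E) = 1%:M.

Definition composeK (m : nat) (Ms Ls : seq 'M[algC]_m) : seq 'M[algC]_m :=
  [seq M *m L | M <- Ms, L <- Ls].

Definition idtensK (m : nat) (Ks : seq 'M[algC]_m) : seq 'M[algC]_(m * m) :=
  [seq (1%:M : 'M[algC]_m) *t E | E <- Ks].

Definition Fe (m : nat) (rho : 'M[algC]_m) (Ks : seq 'M[algC]_m) : algC :=
  \sum_(E <- Ks) `|\tr (rho *m E)| ^+ 2.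

Definition PA (d n : nat) (w : algC) (As : seq (op d n)) (x : phase d n) : algC :=
  (dag (Psi w x) *m
     applyK (idtensK As) (Psi w 0 *m dag (Psi w 0)) *m Psi w x) 0 0.

Definition fst_idx (n k : nat) (i : 'I_(n - k)) : 'I_n := widen_ord (leq_subr k n) i.

Definition ketbar (d n : nat) (w : algC) (h : 'I_n -> phase d n) (v0 : vec d n)
  (l : label d n) : vec d n :=
  (\prod_(i < n) (Nop w (h i)) ^+ (val (l 0 i))) *m v0.

(* the generators |overline{(s,u)}>, u in F_d^k, of C^(s) *)
Definition code_gens (d n k : nat) (w : algC) (h : 'I_n -> phase d n) (v0 : vec d n)
  (s : label d (n - k)) : seq (vec d n) :=
  [seq ketbar w h v0 l |
     l <- enum [pred l : label d n | [forall i : 'I_(n - k), l 0 (@fst_idx n k i) == s 0 i]]].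

Definition orth_proj_onto (m : nat) (P : 'M[algC]_m) (S : seq 'cV[algC]_m) : Prop :=
  (forall v, v \in S -> P *m v = v) /\
  (forall u : 'cV[algC]_m, (forall v, v \in S -> dag u *m v = 0) -> P *m u = 0).

From HB Require Import structures.
From mathcomp Require Import all_boot all_order all_algebra.
From mathcomp Require Import algC.
From mathcomp Require Import mxtens.
From mathcomp Require Import ring.
Import Order.TTheory GRing.Theory Num.Theory.
Local Open Scope ring_scope.
Set Implicit Arguments. Unset Strict Implicit. Unset Printing Implicit Defensive.

(* The N_(g_i) act diagonally on the orthonormal basis |l> (the ketbar vectors) with
   eigenvalues w^(l_i), so the code projector is a Fourier sum over the stabilizer group:
   Pi_s = d^-(n-k) sum_a w^(-a.s) N_g^a, where N_g^a = prod_i N_(g_i)^(a_i).  Since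
   <g_i, xhat t> = t_i, the operator N_(xhat t)^dagger maps C^(t+s) into C^(s), hence
   Pi_s N_(xhat t)^dagger Pi_(t+s) = N_(xhat t)^dagger Pi_(t+s), and for each Kraus operator E
   the trace in F_e is the (t+s)-th Fourier coefficient of a |-> d^-n tr(N_(xhat t)^dagger N_g^a E).
   Parseval turns the average over s into sum_a |d^-n tr(N_(xhat t)^dagger N_g^a E)|^2.  Up to a
   phase N_(xhat t)^dagger N_g^a is N_(xhat t - a.g)^dagger, and <Psi_x|(Id (x) E)|Psi> =
   d^-n tr(N_x^dagger E), so this is the contribution of E to the sum of P_A over xhat t + L. *)

Lemma dagM m p q (A : 'M[algC]_(m, p)) (B : 'M[algC]_(p, q)) : dag (A *m B) = dag B *m dag A.
Proof. by rewrite /dag map_mxM trmx_mul. Qed.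

Lemma dagZ m p c (A : 'M[algC]_(m, p)) : dag (c *: A) = c^* *: dag A.
Proof. by apply/matrixP => i j; rewrite !mxE rmorphM. Qed.

Lemma dagK m p (A : 'M[algC]_(m, p)) : dag (dag A) = A.
Proof. by apply/matrixP => i j; rewrite !mxE conjCK. Qed.

Lemma dag_sum m p (I : Type) (r : seq I) (P : pred I) (F : I -> 'M[algC]_(m, p)) :
  dag (\sum_(i <- r | P i) F i) = \sum_(i <- r | P i) dag (F i).
Proof.
have dagD (A B : 'M[algC]_(m, p)) : dag (A + B) = dag A + dag B.
  by apply/matrixP => i j; rewrite !mxE rmorphD.
have dag0 : dag (0 : 'M[algC]_(m, p)) = 0 by apply/matrixP => i j; rewrite !mxE rmorph0.
exact: (big_morph (@dag m p) dagD dag0).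
Qed.

Lemma dag_tens m1 n1 m2 n2 (A : 'M[algC]_(m1, n1)) (B : 'M[algC]_(m2, n2)) :
  dag (A *t B) = dag A *t dag B.
Proof. by rewrite /dag map_mxT trmx_tens. Qed.

Lemma dag_delta N (i : 'I_N) : dag (delta_mx i 0 : 'cV[algC]_N) = delta_mx 0 i.
Proof. by apply/matrixP => a b; rewrite !mxE conjC_nat andbC. Qed.

Lemma tens_mx11 (A B : 'M[algC]_1) : (A *t B : 'M_1) 0 0 = A 0 0 * B 0 0.
Proof. by rewrite mxE [(mxtens_unindex _).1]ord1 [(mxtens_unindex _).2]ord1. Qed.

Lemma tens_sandwich m1 m2 (a c : 'cV[algC]_m1) (b e : 'cV[algC]_m2) (M1 : 'M_m1) (M2 : 'M_m2) :
  (dag (a *t b : 'cV_(m1 * m2)) *m (M1 *t M2) *m (c *t e : 'cV_(m1 * m2))) 0 0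
  = (dag a *m M1 *m c) 0 0 * (dag b *m M2 *m e) 0 0.
Proof.
rewrite (dag_tens a b) (tensmx_mul (dag a) (dag b) M1 M2).
by rewrite (tensmx_mul (dag a *m M1) (dag b *m M2) c e) tens_mx11.
Qed.

Lemma exists_row_neq (T : eqType) m (u v : 'rV[T]_m) : u != v -> exists j, u 0 j != v 0 j.
Proof.
move=> uv; apply/existsP; apply: contraR uv; rewrite negb_exists => /forallP uv.
by apply/eqP/rowP => j; apply/eqP/negPn.
Qed.

Lemma sum_mul_eq (R : pzSemiRingType) (T : finType) (F : T -> R) (x : T) :
  \sum_b F b * (b == x)%:R = F x.
Proof. by rewrite (bigD1 x) //= eqxx mulr1 big1 ?addr0 // => b /negbTE->; rewrite mulr0. Qed.

Lemma Fe_composeK1 m (rho M : 'M[algC]_m) (Ks : seq 'M[algC]_m) :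
  Fe rho (composeK [:: M] Ks) = \sum_(E <- Ks) `|\tr (rho *m (M *m E))| ^+ 2.
Proof. by rewrite /Fe /composeK /= cats0 big_map. Qed.

Lemma sum_coset (K : finFieldType) (R : nmodType) p q m (L : {vspace 'M[K]_(p, q)})
    (b : 'I_m -> 'M[K]_(p, q)) (x0 : 'M[K]_(p, q)) (F : 'M[K]_(p, q) -> R) :
  basis_of L [seq b i | i <- enum 'I_m] ->
  \sum_(x | x - x0 \in L) F x = \sum_(a : 'rV[K]_m) F (x0 - \sum_i a 0 i *: b i).
Proof.
pose B := [tuple b i | i < m]; rewrite (_ : [seq _ | _ <- _] = val B) //.
move=> /andP[/eqP span_B free_B].
have combE (a : 'rV[K]_m) : \sum_i a 0 i *: b i = \sum_i a 0 i *: B`_i.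
  by apply: eq_bigr => i _; rewrite nth_mktuple.
have comb_inj : injective (fun a : 'rV[K]_m => x0 - \sum_i a 0 i *: b i).
  move=> a a' /= /addrI /oppr_inj /eqP; rewrite -subr_eq0 !combE -sumrB.
  under eq_bigr do rewrite -scalerBl.
  move=> /eqP comb0; apply/rowP => i; apply/eqP; rewrite -subr_eq0.
  by move/freeP: free_B => /(_ _ comb0) ->.
rewrite -[RHS](big_imset _ (in2W comb_inj)) /=; apply: eq_bigl => x.
apply/idP/imsetP => [|[a _ ->]]; last first.
  rewrite addrAC subrr add0r memvN combE; apply: memv_suml => i _; apply: memvZ.
  by rewrite -span_B memv_span // mem_nth ?size_tuple.
rewrite -span_B => /coord_span x_span.
exists (\row_i - coord B i (x - x0)) => //.
rewrite combE; under eq_bigr do rewrite mxE scaleNr.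
by rewrite sumrN -x_span opprK addrC subrK.
Qed.

Section ScalarCommutation.

Variables (R : comPzRingType) (N : nat).
Implicit Types (A B : 'M[R]_N) (v : 'cV[R]_N) (c : R).

Lemma comm_exp A B c : A *m B = c *: (B *m A) -> forall j, A *m B ^+ j = c ^+ j *: (B ^+ j *m A).
Proof.
move=> AB; elim=> [|j IHj]; first by rewrite !expr0 -idmxE mulmx1 mul1mx scale1r.
by rewrite !exprSr -!mulmxE mulmxA IHj -scalemxAl -mulmxA AB -scalemxAr scalerA mulmxA.
Qed.

Lemma comm_prod (I : Type) (r : seq I) A (B : I -> 'M[R]_N) (c : I -> R) :
  (forall i, A *m B i = c i *: (B i *m A)) ->
  A *m (\prod_(i <- r) B i) = (\prod_(i <- r) c i) *: ((\prod_(i <- r) B i) *m A).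
Proof.
move=> AB; elim: r => [|i r IHr]; first by rewrite !big_nil -idmxE mulmx1 mul1mx scale1r.
rewrite !big_cons -!mulmxE mulmxA AB -scalemxAl -mulmxA IHr -scalemxAr scalerA mulmxA.
by rewrite mulrC.
Qed.

Lemma eig_exp A v c : A *m v = c *: v -> forall j, A ^+ j *m v = c ^+ j *: v.
Proof.
move=> Av; elim=> [|j IHj]; first by rewrite !expr0 -idmxE mul1mx scale1r.
by rewrite !exprS -mulmxE -mulmxA IHj -scalemxAr Av scalerA mulrC.
Qed.

Lemma eig_prod (I : Type) (r : seq I) (B : I -> 'M[R]_N) v (c : I -> R) :
  (forall i, B i *m v = c i *: v) -> (\prod_(i <- r) B i) *m v = (\prod_(i <- r) c i) *: v.
Proof.
move=> Bv; elim: r => [|i r IHr]; first by rewrite !big_nil -idmxE mul1mx scale1r.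
by rewrite !big_cons -mulmxE -mulmxA IHr -scalemxAr Bv scalerA mulrC.
Qed.

End ScalarCommutation.

Section Qudit.

Variables (d : nat) (w : algC).
Hypotheses (Hd : prime d) (Hw : d.-primitive_root w).

Definition chi (x : 'F_d) : algC := w ^+ x.

Lemma chi0 : chi 0 = 1.
Proof. by rewrite /chi expr0. Qed.

Lemma chiD x y : chi (x + y) = chi x * chi y.
Proof.
by rewrite /chi -exprD -[RHS](expr_mod _ (prim_expr_order Hw)) -val_Fp_nat // natrD !natr_Zp.
Qed.

Lemma chiX x (y : 'F_d) : chi x ^+ y = chi (x * y).
Proof.
by rewrite /chi -exprM -[LHS](expr_mod _ (prim_expr_order Hw)) -val_Fp_nat // natrM !natr_Zp.
Qed.

Lemma chi_sum (I : Type) (r : seq I) (P : pred I) (F : I -> 'F_d) :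
  chi (\sum_(i <- r | P i) F i) = \prod_(i <- r | P i) chi (F i).
Proof. exact: (big_morph chi chiD chi0). Qed.

Lemma chiNr x : chi (- x) * chi x = 1.
Proof. by rewrite -chiD addNr chi0. Qed.

Lemma norm_chi x : `|chi x| = 1.
Proof.
have /eqP := congr1 Num.norm (prim_expr_order Hw).
by rewrite normrX normr1 pexpr_eq1 ?prime_gt0 // => /eqP w1; rewrite /chi normrX w1 expr1n.
Qed.

Lemma conj_chi x : (chi x)^* = chi (- x).
Proof.
have chi_neq0 : chi x != 0 by rewrite -normr_eq0 norm_chi oner_neq0.
by apply: (mulIf chi_neq0); rewrite chiNr mulrC -normCK norm_chi expr1n.
Qed.

Lemma chi_eq1 x : (chi x == 1) = (x == 0).
Proof.
apply/idP/eqP => [|->]; last by rewrite chi0.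
rewrite /chi -(prim_order_dvd Hw) /dvdn modn_small => [x0|]; first exact/val_inj/eqP.
by rewrite -[X in (_ < X)%N](Fp_cast Hd).
Qed.

Definition dot m (a s : 'rV['F_d]_m) : 'F_d := \sum_i a 0 i * s 0 i.

Lemma dotC m (a s : 'rV_m) : dot a s = dot s a.
Proof. by apply: eq_bigr => i _; rewrite mulrC. Qed.

Lemma dotDr m (a s t : 'rV_m) : dot a (s + t) = dot a s + dot a t.
Proof. by rewrite /dot -big_split; apply: eq_bigr => i _; rewrite mxE mulrDr. Qed.

Lemma dotBl m (a b s : 'rV_m) : dot (a - b) s = dot a s - dot b s.
Proof. by rewrite /dot -sumrB; apply: eq_bigr => i _; rewrite !mxE mulrBl. Qed.

Lemma dot0l m (s : 'rV_m) : dot 0 s = 0.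
Proof. by rewrite /dot big1 // => i _; rewrite mxE mul0r. Qed.

Lemma dot_delta m (a : 'rV_m) j : dot a (delta_mx 0 j) = a 0 j.
Proof.
rewrite /dot (bigD1 j) //= big1 ?addr0 => [|i ij]; first by rewrite mxE !eqxx mulr1.
by rewrite mxE (negbTE ij) andbF mulr0.
Qed.

Lemma natr_expd_neq0 m : (d ^ m)%:R != 0 :> algC.
Proof. by rewrite pnatr_eq0 -lt0n expn_gt0 prime_gt0. Qed.

Lemma card_Fp_rV m : #|'rV['F_d]_m| = (d ^ m)%N.
Proof. by rewrite card_mx card_Fp // mul1n. Qed.

(* Translating [s] by [delta_mx 0 j] multiplies the sum by [chi (c 0 j)], which is not 1. *)
Lemma sum_chi_dot m (c : 'rV_m) :
  \sum_s chi (dot c s) = (c == 0)%:R * (d ^ m)%:R.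
Proof.
have [->|c_neq0] := eqVneq c 0.
  by under eq_bigr do rewrite dot0l chi0; rewrite sumr_const card_Fp_rV mul1r.
have [j] := exists_row_neq c_neq0; rewrite mxE => cj_neq0.
rewrite mul0r; set S := (X in X = 0).
have S_fix : S * chi (c 0 j) = S.
  rewrite /S [RHS](reindex_inj (addIr (delta_mx 0 j))) mulr_suml.
  by apply: eq_bigr => s _; rewrite dotDr dot_delta chiD.
have chi_neq1 : chi (c 0 j) != 1 by rewrite chi_eq1.
apply/eqP; move: S_fix => /eqP; rewrite -subr_eq0 -{2}[S]mulr1 -mulrBr mulf_eq0 subr_eq0.
by rewrite (negbTE chi_neq1) orbF.
Qed.

Lemma parseval m (u : 'rV_m) (c : 'rV_m -> algC) :
  \sum_s `|\sum_a chi (- dot a (u + s)) * c a| ^+ 2 = (d ^ m)%:R * \sum_a `|c a| ^+ 2.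
Proof.
have cross a b : \sum_s chi (- dot a (u + s)) * c a * (chi (- dot b (u + s)) * c b)^*
                 = (a == b)%:R * (d ^ m)%:R * (c a * (c b)^*).
  under eq_bigr do rewrite rmorphM /= conj_chi opprK mulrACA -chiD addrC -dotBl dotDr chiD.
  rewrite -mulr_suml -mulr_sumr sum_chi_dot subr_eq0 eq_sym.
  by have [->|_] := eqVneq a b; rewrite ?subrr ?dot0l ?chi0 ?mul1r // mul0r mulr0 mul0r.
under eq_bigr do rewrite normCK rmorph_sum /= big_distrlr.
rewrite exchange_big mulr_sumr; apply: eq_bigr => a _ /=; rewrite exchange_big /=.
under eq_bigr => b _ do rewrite cross.
rewrite (bigD1 a) //= big1 ?addr0 => [|b ba]; first by rewrite eqxx mul1r normCK.
by rewrite eq_sym (negbTE ba) !mul0r.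
Qed.

Lemma qop_mul (f f' : 'F_d -> 'F_d -> algC) :
  qop f *m qop f' = qop (fun c e => \sum_b f c b * f' b e).
Proof.
apply/matrixP => i j; rewrite !mxE (reindex _ (onW_bij _ (enum_rank_bij _))) /=.
by apply: eq_bigr => b _; rewrite !mxE enum_rankK.
Qed.

Lemma scale_qop c (f : 'F_d -> 'F_d -> algC) : c *: qop f = qop (fun x e => c * f x e).
Proof. by apply/matrixP => i j; rewrite !mxE. Qed.

Lemma eq_qop (f f' : 'F_d -> 'F_d -> algC) : f =2 f' -> qop f = qop f'.
Proof. by move=> ff'; apply/matrixP => i j; rewrite !mxE ff'. Qed.

Lemma qop_eq : qop (fun c e : 'F_d => (c == e)%:R) = 1%:M.
Proof. by apply/matrixP => i j; rewrite !mxE (inj_eq enum_val_inj). Qed.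

Lemma dag_qop (f : 'F_d -> 'F_d -> algC) : dag (qop f) = qop (fun c e => (f e c)^*).
Proof. by apply/matrixP => i j; rewrite !mxE. Qed.

Lemma Xq_exp j : Xq d ^+ j = qop (fun c e => (c == e - j%:R)%:R).
Proof.
elim: j => [|j IHj]; first by rewrite expr0 -idmxE -qop_eq; apply: eq_qop => c e; rewrite subr0.
rewrite exprSr IHj -mulmxE qop_mul; apply: eq_qop => c e.
by rewrite sum_mul_eq -natr1 opprD addrA addrAC.
Qed.

Lemma Zq_exp j : Zq d w ^+ j = qop (fun c e => (c == e)%:R * w ^+ (j * e)).
Proof.
elim: j => [|j IHj]; first by rewrite expr0 -idmxE -qop_eq; apply: eq_qop => c e; rewrite mulr1.
rewrite exprSr IHj -mulmxE qop_mul; apply: eq_qop => c e.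
rewrite (eq_bigr (fun b => (c == b)%:R * w ^+ (j * b) * w ^+ e * (b == e)%:R)) => [|b _].
  by rewrite sum_mul_eq -mulrA -exprD mulSn addnC.
by rewrite [(b == e)%:R * _]mulrC mulrA.
Qed.

Definition weyl (a b : 'F_d) : 'M[algC]_#|'F_d| :=
  qop (fun c e => (c == e - a)%:R * chi (b * e)).

Lemma Xq_Zq_weyl (a b : 'F_d) : Xq d ^+ a * Zq d w ^+ b = weyl a b.
Proof.
rewrite Xq_exp Zq_exp -mulmxE qop_mul; apply: eq_qop => c e.
rewrite (eq_bigr (fun m => (c == m - a%:R)%:R * w ^+ (b * e) * (m == e)%:R)) => [|m _].
  by rewrite sum_mul_eq natr_Zp -chiX /chi exprM.
by rewrite mulrA mulrAC.
Qed.

Lemma weylM a b a' b' : weyl a b *m weyl a' b' = chi (- (b * a')) *: weyl (a + a') (b + b').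
Proof.
rewrite qop_mul scale_qop; apply: eq_qop => c e.
rewrite (eq_bigr (fun m => (c == m - a)%:R * chi (b * m) * chi (b' * e) * (m == e - a')%:R)).
  rewrite sum_mul_eq -mulrA -chiD [RHS]mulrCA -chiD.
  by congr ((c == _)%:R * chi _); ring.
by move=> m _; rewrite [(m == _)%:R * _]mulrC mulrA.
Qed.

Lemma weyl00 : weyl 0 0 = 1%:M.
Proof. by rewrite -qop_eq; apply: eq_qop => c e; rewrite subr0 mul0r chi0 mulr1. Qed.

Lemma dag_weyl a b : dag (weyl a b) = chi (- (b * a)) *: weyl (- a) (- b).
Proof.
rewrite dag_qop scale_qop; apply: eq_qop => c e.
rewrite rmorphM /= conjC_nat conj_chi opprK eq_sym subr_eq.
case: eqP => [->|]; last by rewrite !mul0r mulr0.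
by rewrite !mul1r -chiD; congr chi; ring.
Qed.

Definition Nq_phase (a b : 'F_d) : algC := if d == 2%N then 'i ^+ (a * b) else 1.

Lemma norm_Nq_phase a b : `|Nq_phase a b| = 1.
Proof. by rewrite /Nq_phase; case: ifP; rewrite ?normrX ?normCi ?expr1n ?normr1. Qed.

Lemma Nq_phase_neq0 a b : Nq_phase a b != 0.
Proof. by rewrite -normr_eq0 norm_Nq_phase oner_neq0. Qed.

Lemma NqE a b : Nq w a b = Nq_phase a b *: weyl a b.
Proof. by rewrite /Nq Xq_Zq_weyl. Qed.

Lemma Nq00 : Nq w (0 : 'F_d) 0 = 1%:M.
Proof. by rewrite NqE weyl00 /Nq_phase muln0 expr0; case: ifP; rewrite scale1r. Qed.

Definition Nq_mul_phase (a b a' b' : 'F_d) : algC :=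
  Nq_phase a b * Nq_phase a' b' * chi (- (b * a')) / Nq_phase (a + a') (b + b').

Lemma norm_Nq_mul_phase a b a' b' : `|Nq_mul_phase a b a' b'| = 1.
Proof.
by rewrite normrM normrV ?unitfE ?Nq_phase_neq0 // !normrM !norm_Nq_phase norm_chi !mul1r invr1.
Qed.

Lemma NqM a b a' b' :
  Nq w a b *m Nq w a' b' = Nq_mul_phase a b a' b' *: Nq w (a + a') (b + b').
Proof.
rewrite !NqE -scalemxAl -scalemxAr weylM !scalerA; congr (_ *: _).
by rewrite /Nq_mul_phase -!mulrA mulVf ?Nq_phase_neq0 ?mulr1.
Qed.

Lemma Nq_comm a b a' b' :
  Nq w a b *m Nq w a' b' = chi (a * b' - b * a') *: (Nq w a' b' *m Nq w a b).
Proof.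
rewrite !NqM scalerA /Nq_mul_phase [a' + a]addrC [b' + b]addrC; congr (_ *: _).
have -> : chi (- (b * a')) = chi (a * b' - b * a') * chi (- (b' * a)).
  by rewrite -chiD; congr chi; ring.
ring.
Qed.

Lemma Nq_unitary (a b : 'F_d) : dag (Nq w a b) *m Nq w a b = 1%:M.
Proof.
rewrite NqE dagZ -scalemxAl -scalemxAr dag_weyl -scalemxAl weylM !scalerA !addNr weyl00.
rewrite -[RHS]scale1r; congr (_ *: _).
have chi_cancel : chi (- (b * a)) * chi (- (- b * a)) = 1 by rewrite -chiD -chi0; congr chi; ring.
by rewrite mulrA [_^* * _]mulrC -normCK norm_Nq_phase expr1n mul1r chi_cancel.
Qed.

Section Pauli.

Variable n : nat.
Implicit Types (A B : 'I_n -> 'M[algC]_#|'F_d|) (x y z : phase d n).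

Lemma eq_ntens A B : A =1 B -> ntens A = ntens B.
Proof. by move=> AB; apply/matrixP => p q; rewrite !mxE; apply: eq_bigr => i _; rewrite AB. Qed.

Definition label_digits (r : 'I_(dimn d n)) : {ffun 'I_n -> 'I_#|'F_d|} :=
  [ffun i => enum_rank ((enum_val r : label d n) 0 i)].

Lemma label_digits_bij : bijective label_digits.
Proof.
exists (fun f : {ffun 'I_n -> 'I_#|'F_d|} => enum_rank (\row_i enum_val (f i) : label d n)).
- move=> r; rewrite -[RHS]enum_valK; congr enum_rank.
  by apply/rowP => i; rewrite !mxE ffunE enum_rankK.
- by move=> f; apply/ffunP => i; rewrite ffunE enum_rankK mxE enum_valK.
Qed.

Lemma ntens_mul A B : ntens A *m ntens B = ntens (fun i => A i *m B i).
Proof.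
apply/matrixP => p q; rewrite !mxE.
under [RHS]eq_bigr do rewrite mxE.
rewrite bigA_distr_bigA /= (reindex _ (onW_bij _ label_digits_bij)) /=.
by apply: eq_bigr => r _; rewrite !mxE -big_split; apply: eq_bigr => i _; rewrite ffunE.
Qed.

Lemma ntens_scale (c : 'I_n -> algC) A :
  ntens (fun i => c i *: A i) = (\prod_i c i) *: ntens A.
Proof. by apply/matrixP => p q; rewrite !mxE -big_split; apply: eq_bigr => i _; rewrite mxE. Qed.

Lemma ntens1 : ntens (fun _ : 'I_n => 1%:M : 'M[algC]_#|'F_d|) = 1%:M.
Proof.
apply/matrixP => p q; rewrite !mxE.
have [<-|pq] := eqVneq p q; first by rewrite big1 // => i _; rewrite mxE eqxx.
have /exists_row_neq[i pq_i] : (enum_val p : label d n) != enum_val q.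
  by rewrite (inj_eq enum_val_inj).
by rewrite (bigD1 i) //= mxE (inj_eq enum_rank_inj) (negbTE pq_i) mul0r.
Qed.

Lemma dag_ntens A : dag (ntens A) = ntens (fun i => dag (A i)).
Proof. by apply/matrixP => p q; rewrite !mxE rmorph_prod; apply: eq_bigr => i _; rewrite !mxE. Qed.

Lemma Nop0 : Nop w (0 : phase d n) = 1%:M.
Proof. by rewrite /Nop -ntens1; apply: eq_ntens => i; rewrite !mxE Nq00. Qed.

Lemma NopM y y' : exists2 c, `|c| = 1 & Nop w y *m Nop w y' = c *: Nop w (y + y').
Proof.
exists (\prod_i Nq_mul_phase (y i 0) (y i 1) (y' i 0) (y' i 1)).
  by rewrite normr_prod big1 // => i _; rewrite norm_Nq_mul_phase.
by rewrite /Nop ntens_mul -ntens_scale; apply: eq_ntens => i; rewrite NqM !mxE.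
Qed.

Lemma Nop_comm y y' : Nop w y *m Nop w y' = chi (symp y y') *: (Nop w y' *m Nop w y).
Proof.
by rewrite /Nop !ntens_mul chi_sum -ntens_scale; apply: eq_ntens => i; apply: Nq_comm.
Qed.

Lemma Nop_unitary y : dag (Nop w y) *m Nop w y = 1%:M.
Proof. by rewrite /Nop dag_ntens ntens_mul -ntens1; apply: eq_ntens => i; apply: Nq_unitary. Qed.

Lemma Nop_dag_comm y x :
  Nop w y *m dag (Nop w x) = chi (- symp y x) *: (dag (Nop w x) *m Nop w y).
Proof.
have -> : dag (Nop w x) *m Nop w y = chi (symp y x) *: (Nop w y *m dag (Nop w x)).
  rewrite -[LHS]mulmx1 -(mulmx1C (Nop_unitary x)) !mulmxA -(mulmxA _ (Nop w y)) Nop_comm.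
  by rewrite -scalemxAr -scalemxAl mulmxA Nop_unitary mul1mx.
by rewrite scalerA chiNr scale1r.
Qed.

Definition phased_pauli (M : op d n) y := exists2 c, `|c| = 1 & M = c *: Nop w y.

Lemma phased_pauli1 : phased_pauli 1 0.
Proof. by exists 1; rewrite ?normr1 // scale1r Nop0 idmxE. Qed.

Lemma phased_pauliM M M' y y' :
  phased_pauli M y -> phased_pauli M' y' -> phased_pauli (M * M') (y + y').
Proof.
move=> [c c1 ->] [c' c'1 ->]; have [c'' c''1 NyNy'] := NopM y y'.
exists (c * c' * c''); first by rewrite !normrM c1 c'1 c''1 !mul1r.
by rewrite -mulmxE -scalemxAl -scalemxAr NyNy' !scalerA.
Qed.

Lemma phased_pauli_prod (I : Type) (r : seq I) (y : I -> phase d n) (a : I -> 'F_d) :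
  phased_pauli (\prod_(i <- r) Nop w (y i) ^+ a i) (\sum_(i <- r) a i *: y i).
Proof.
elim: r => [|i r IHr]; first by rewrite !big_nil; apply: phased_pauli1.
rewrite !big_cons; apply: phased_pauliM => //.
rewrite -[X in X *: _]natr_Zp scaler_nat; elim: (val (a i)) => [|j IHj].
  by rewrite expr0 mulr0n; apply: phased_pauli1.
by rewrite exprS mulrS; apply: phased_pauliM => //; exists 1; rewrite ?normr1 ?scale1r.
Qed.

Lemma phased_pauli_unitary M y : phased_pauli M y -> dag M *m M = 1%:M.
Proof.
case=> c c1 ->; rewrite dagZ -scalemxAl -scalemxAr Nop_unitary scalerA.
by rewrite mulrC -normCK c1 expr1n scale1r.
Qed.

Lemma dag_Nop_mul x z :
  exists2 c, `|c| = 1 & dag (Nop w x) *m Nop w z = c *: dag (Nop w (x - z)).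
Proof.
have [c c1 NzNxz] := NopM z (x - z); rewrite subrKC in NzNxz.
exists c => //; rewrite -[dag (Nop w (x - z))]mulmx1 -(Nop_unitary z) mulmxA -dagM NzNxz dagZ.
by rewrite -scalemxAl scalerA -normCK c1 expr1n scale1r.
Qed.

Lemma norm_tr_phased_pauli M x y (E : op d n) : phased_pauli M y ->
  `|\tr (dag (Nop w x) *m M *m E)| = `|\tr (dag (Nop w (x - y)) *m E)|.
Proof.
case=> c c1 ->; have [c' c'1 NxNy] := dag_Nop_mul x y.
by rewrite -scalemxAr NxNy -!scalemxAl !mxtraceZ !normrM c1 c'1 !mul1r.
Qed.

End Pauli.

Section Code.

Variables (n k : nat) (g h : 'I_n -> phase d n) (v0 : vec d n).
Hypotheses (Hgh : forall i j, symp (g i) (h j) = (i == j)%:R)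
           (Hv0unit : (dag v0 *m v0) 0 0 = 1)
           (Hv0stab : forall i, Nop w (g i) *m v0 = v0).

Local Notation ketb := (ketbar w h v0).
Local Notation code := (@code_gens d n k w h v0).

Lemma ketbar_eig j l : Nop w (g j) *m ketb l = chi (l 0 j) *: ketb l.
Proof.
have comm_h i : Nop w (g j) *m Nop w (h i) ^+ l 0 i
                = chi (symp (g j) (h i)) ^+ l 0 i *: (Nop w (h i) ^+ l 0 i *m Nop w (g j)).
  exact/comm_exp/Nop_comm.
rewrite /ketbar mulmxA (comm_prod _ comm_h) -scalemxAl -mulmxA Hv0stab; congr (_ *: _).
under eq_bigr do rewrite Hgh chiX.
rewrite -chi_sum (bigD1 j) //= eqxx mul1r big1 ?addr0 // => i /negbTE ij.
by rewrite eq_sym ij mul0r.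
Qed.

Lemma ketbar_norm l : dag (ketb l) *m ketb l = dag v0 *m v0.
Proof.
rewrite /ketbar dagM mulmxA -(mulmxA (dag v0)).
by rewrite (phased_pauli_unitary (phased_pauli_prod _ _ _)) mulmx1.
Qed.

(* The stabilizer [N_(g j)] separates [l] from [l'] by distinct eigenvalues. *)
Lemma ketbar_orth l l' : l != l' -> dag (ketb l) *m ketb l' = 0.
Proof.
move=> /exists_row_neq[j ll'_j].
set X := dag _ *m _.
have X_fix : X = ((chi (l 0 j))^* * chi (l' 0 j)) *: X.
  rewrite {1}/X -[ketb l']mul1mx -(Nop_unitary (g j)) -mulmxA mulmxA -dagM.
  by rewrite !ketbar_eig dagZ -scalemxAl -scalemxAr scalerA.
have chi_neq1 : (chi (l 0 j))^* * chi (l' 0 j) != 1.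
  by rewrite conj_chi -chiD chi_eq1 addrC subr_eq0 eq_sym.
apply/eqP; move: X_fix => /eqP; rewrite -subr_eq0 -{1}[X]scale1r -scalerBl scaler_eq0.
by rewrite subr_eq0 eq_sym (negbTE chi_neq1).
Qed.

Lemma ketbar_dot l l' : (dag (ketb l) *m ketb l') 0 0 = (l == l')%:R.
Proof.
have [<-|ll'] := eqVneq l l'; first by rewrite ketbar_norm Hv0unit.
by rewrite (ketbar_orth ll') mxE.
Qed.

Lemma ketbar_ext (A B : op d n) : (forall l, A *m ketb l = B *m ketb l) -> A = B.
Proof.
move=> ABl; pose U : op d n := \matrix_(r, c) ketb (enum_val c) r 0.
have mulmxU m (M : 'M_(m, dimn d n)) i c : (M *m U) i c = (M *m ketb (enum_val c)) i 0.
  by rewrite !mxE; apply: eq_bigr => r _; rewrite mxE.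
have U_unitary : U *m dag U = 1%:M.
  apply: mulmx1C; apply/matrixP => i j.
  rewrite mulmxU [RHS]mxE -(inj_eq enum_val_inj) -ketbar_dot !mxE.
  by apply: eq_bigr => r _; rewrite !mxE.
have AU_BU : A *m U = B *m U by apply/matrixP => i c; rewrite !mulmxU ABl.
by rewrite -(mulmx1 A) -(mulmx1 B) -U_unitary !mulmxA AU_BU.
Qed.

Definition syndrome (l : label d n) : label d (n - k) := \row_i l 0 (@fst_idx n k i).

Lemma mem_code_gens s v :
  v \in code s -> exists2 l, syndrome l = s & v = ketb l.
Proof.
case/mapP => l; rewrite mem_enum inE => /forallP ls ->; exists l => //.
by apply/rowP => i; rewrite mxE; apply/eqP.
Qed.

Lemma ketbar_code_gens l : ketb l \in code (syndrome l).
Proof. by apply/mapP; exists l => //; rewrite mem_enum inE; apply/forallP => i; rewrite mxE. Qed.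

Lemma proj_ketbar s P l : orth_proj_onto P (code s) ->
  P *m ketb l = (syndrome l == s)%:R *: ketb l.
Proof.
case=> P_id P_orth; have [ls|ls] := eqVneq (syndrome l) s.
  by rewrite scale1r P_id // -ls ketbar_code_gens.
rewrite scale0r P_orth // => v /mem_code_gens [l' l's ->].
by apply: ketbar_orth; apply: contra ls => /eqP ->; rewrite l's.
Qed.

Definition stab_elem (a : label d (n - k)) : op d n :=
  \prod_i Nop w (g (@fst_idx n k i)) ^+ a 0 i.

Definition stab_vec (a : label d (n - k)) : phase d n := \sum_i a 0 i *: g (@fst_idx n k i).

Lemma phased_pauli_stab_elem a : phased_pauli (stab_elem a) (stab_vec a).
Proof. exact: phased_pauli_prod. Qed.

Definition syndrome_proj (s : label d (n - k)) : op d n :=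
  (d ^ (n - k))%:R^-1 *: \sum_a chi (- dot a s) *: stab_elem a.

Lemma syndrome_proj_eig s (e : label d (n - k)) (v : vec d n) :
  (forall i, Nop w (g (@fst_idx n k i)) *m v = chi (e 0 i) *: v) ->
  syndrome_proj s *m v = (e == s)%:R *: v.
Proof.
move=> gv; have stab_v a : stab_elem a *m v = chi (dot e a) *: v.
  rewrite /stab_elem (eig_prod _ (fun i => eig_exp (gv i) _)) /dot chi_sum.
  by congr (_ *: _); apply: eq_bigr => i _; rewrite chiX.
rewrite /syndrome_proj -scalemxAl mulmx_suml.
under eq_bigr do rewrite -scalemxAl stab_v scalerA -chiD dotC addrC -dotBl.
by rewrite -scaler_suml sum_chi_dot scalerA subr_eq0 mulrCA mulVf ?mulr1 ?natr_expd_neq0.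
Qed.

Lemma proj_syndrome_proj s P : orth_proj_onto P (code s) -> P = syndrome_proj s.
Proof.
move=> HP; apply: ketbar_ext => l.
rewrite (proj_ketbar _ HP) (@syndrome_proj_eig s (syndrome l)) // => i.
by rewrite ketbar_eig mxE.
Qed.

(* [N_x^dagger] shifts the syndrome by [-t], so it maps the code [C^(t + s)] into [C^(s)]. *)
Lemma proj_dag_Nop_proj x (t s : label d (n - k)) (P P' : op d n) :
  (forall i, symp (g (@fst_idx n k i)) x = t 0 i) ->
  orth_proj_onto P (code s) ->
  orth_proj_onto P' (code (t + s)) ->
  P *m (dag (Nop w x) *m P') = dag (Nop w x) *m P'.
Proof.
move=> gx HP HP'; rewrite (proj_syndrome_proj HP); apply: ketbar_ext => l.
rewrite -!mulmxA (proj_ketbar _ HP').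
have [ts|_] := eqVneq (syndrome l) (t + s); last by rewrite !scale0r !mulmx0.
rewrite !scale1r (@syndrome_proj_eig s s) ?eqxx ?scale1r // => i.
rewrite mulmxA Nop_dag_comm -scalemxAl -mulmxA ketbar_eig -scalemxAr scalerA -chiD gx.
by have := congr1 (fun r : label d (n - k) => r 0 i) ts; rewrite !mxE => ->; rewrite addKr.
Qed.

Lemma tr_proj_dag_Nop_proj x (t s : label d (n - k)) (P P' E : op d n) : (k <= n)%N ->
  (forall i, symp (g (@fst_idx n k i)) x = t 0 i) ->
  orth_proj_onto P (code s) ->
  orth_proj_onto P' (code (t + s)) ->
  \tr ((d ^ k)%:R^-1 *: P *m (dag (Nop w x) *m P' *m E))
  = (d ^ n)%:R^-1 * \sum_a chi (- dot a (t + s)) * \tr (dag (Nop w x) *m stab_elem a *m E).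
Proof.
move=> kn gx HP HP'.
rewrite -scalemxAl mxtraceZ mulmxA (proj_dag_Nop_proj gx HP HP') (proj_syndrome_proj HP').
rewrite -scalemxAr -scalemxAl mxtraceZ mulrA -invfM -natrM -expnD subnKC //; congr (_ * _).
rewrite mulmx_sumr mulmx_suml raddf_sum /=; apply: eq_bigr => a _.
by rewrite -scalemxAr -scalemxAl mxtraceZ.
Qed.

End Code.

Section Choi.

Variable n : nat.

Lemma ket_sandwich (M : op d n) l l' :
  (dag (ket l) *m M *m ket l') 0 0 = M (enum_rank l) (enum_rank l').
Proof. by rewrite /ket dag_delta -rowE -colE !mxE. Qed.

Lemma Psi_overlap x (E : op d n) :
  (dag (Psi w x) *m (1%:M *t E) *m Psi w 0) 0 0 = (d ^ n)%:R^-1 * \tr (dag (Nop w x) *m E).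
Proof.
rewrite /Psi Nop0 dagZ dag_sum -scalemxAl -scalemxAr -!scalemxAl mxE mxE mulrA.
have -> : (sqrtC (d ^ n)%:R)^-1 * (sqrtC (d ^ n)%:R)^-1^* = (d ^ n)%:R^-1 :> algC.
  by rewrite geC0_conj ?invr_ge0 ?sqrtC_ge0 ?ler0n // -expr2 exprVn sqrtCK.
congr (_ * _); rewrite !mulmx_suml summxE [RHS](reindex _ (onW_bij _ (enum_rank_bij _))) /=.
apply: eq_bigr => l _; rewrite mulmx_sumr summxE.
under eq_bigr => l' _.
  rewrite mul1mx tens_sandwich dagM -[dag (ket l) *m _ *m E]mulmxA !ket_sandwich mxE.
  rewrite (inj_eq enum_rank_inj) mulrC eq_sym.
  over.
by rewrite sum_mul_eq.
Qed.

Lemma PAE (As : seq (op d n)) x :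
  PA w As x = \sum_(E <- As) `|(d ^ n)%:R^-1 * \tr (dag (Nop w x) *m E)| ^+ 2.
Proof.
rewrite /PA /applyK /idtensK big_map mulmx_sumr mulmx_suml summxE; apply: eq_bigr => E _.
set a := dag (Psi w x) *m (1%:M *t E) *m Psi w 0.
have -> : dag (Psi w x) *m ((1%:M *t E) *m (Psi w 0 *m dag (Psi w 0)) *m dag (1%:M *t E))
            *m Psi w x = a *m dag a.
  by rewrite /a !dagM dagK !mulmxA.
by rewrite -Psi_overlap normCK mxE big_ord1 !mxE.
Qed.

End Choi.

End Qudit.

Unset Implicit Arguments.

Theorem theorem1 (d n k : nat) (w : algC)
  (Hd : prime d) (Hn : (1 <= n)%N) (Hk : (k <= n)%N)
  (Hw : d.-primitive_root w)
  (L : {vspace 'M['F_d]_(n, 2)})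
  (HLiso : isotropic L) (HLdim : \dim L = (n - k)%N)
  (g h : 'I_n -> 'M['F_d]_(n, 2))
  (Hbasis : basis_of L [seq g (@fst_idx n k i) | i <- enum 'I_(n - k)])
  (Hgh : forall i j, symp (g i) (h j) = (i == j)%:R)
  (Hgg : forall i j, symp (g i) (g j) = 0)
  (Hhh : forall i j, symp (h i) (h j) = 0)
  (v0 : 'cV[algC]_#|'rV['F_d]_n|)
  (Hv0unit : (dag v0 *m v0) 0 0 = 1)
  (Hv0stab : forall i : 'I_n, Nop w (g i) *m v0 = v0)
  (Pi : 'rV['F_d]_(n - k) -> 'M[algC]_#|'rV['F_d]_n|)
  (HPi : forall s, orth_proj_onto (Pi s) (@code_gens d n k w h v0 s))
  (xhat : 'rV['F_d]_(n - k) -> 'M['F_d]_(n, 2))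
  (Hxhat : forall t (i : 'I_(n - k)), symp (g (@fst_idx n k i)) (xhat t) = t 0 i) :
  forall (t : 'rV['F_d]_(n - k)) (As : seq 'M[algC]_#|'rV['F_d]_n|),
    trace_preserving As ->
    ((d ^ (n - k))%N%:R)^-1 *
      \sum_(s : 'rV['F_d]_(n - k))
        Fe ((d ^ k)%N%:R^-1 *: Pi s)
           (composeK [:: dag (Nop w (xhat t)) *m Pi (t + s)] As)
    = \sum_(x : 'M['F_d]_(n, 2) | x - xhat t \in L) PA w As x.
Proof.
move=> t As _.
under eq_bigr => s _ do rewrite Fe_composeK1.
under eq_bigr => s _ do under eq_bigr => E _ do
  rewrite (tr_proj_dag_Nop_proj Hd Hw Hgh Hv0unit Hv0stab _ Hk (Hxhat t) (HPi s) (HPi (t + s))).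
under eq_bigr => s _ do under eq_bigr => E _ do rewrite normrM exprMn.
under [RHS]eq_bigr => x _ do rewrite PAE //.
rewrite exchange_big [RHS]exchange_big mulr_sumr /=; apply: eq_bigr => E _.
rewrite -mulr_sumr parseval // mulrCA mulKf ?natr_expd_neq0 //.
rewrite (sum_coset _ _ Hbasis) mulr_sumr; apply: eq_bigr => a _.
have stab_a := phased_pauli_stab_elem Hd Hw g a.
by rewrite normrM exprMn (norm_tr_phased_pauli Hd Hw _ _ stab_a) /stab_vec.
Qed.
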